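(* Let $X,Y$ be infinite dimensional Banach lattices which are relatively $s$-decomposable for some $1\le s\le\infty$, and suppose $\ell_p$ is finitely lattice representable in $Y_U$ for some $p\le s$. Then for every $q\in[1,\infty]$ with $1/p\ge1/q+1/s$, $X$ satisfies a lower $q$-estimate and $M_{[q]}(X)\le D_s(X,Y)$.
   Context: Banach lattices are real; disjoint means $|x|\wedge|y|=0$. $X,Y$ are relatively $s$-decomposable if there is $D$ with $\|\sum_{i=1}^n y_i\|_Y\le D(\sum_i(\|y_i\|_Y/\|x_i\|_X)^s)^{1/s}\|\sum_{i=1}^n x_i\|_X$ for all $n$ and all pairwise disjoint nonzero $x_i\in X$, pairwise disjoint nonzero $y_i\in Y$; $D_s(X,Y)$ is the infimum of such $D$. Lower $q$-estimate: $(\sum\|x_i\|^q)^{1/q}\le M\|\sum x_i\|$ for all finite families of pairwise disjoint elements; $M_{[q]}(X)$ is the infimum of such $M$. $\ell_p$ is finitely lattice representable in a Banach lattice $Z$ if for every $n$ and $\varepsilon>0$ there are pairwise disjoint $z_1,\dots,z_n\in Z$ with $\|a\|_{\ell_p^n}\le\|\sum a_iz_i\|_Z\le(1+\varepsilon)\|a\|_{\ell_p^n}$ for all $a\in\mathbb R^n$. $\mathfrak B_n(Y)$ is the set of $n$-tuples of pairwise disjoint norm-one elements of $Y$; $\|a\|_{Y_U(n)}:=\sup\{\|\sum_{i=1}^n a_iy_i\|_Y:(y_i)\in\mathfrak B_n(Y)\}$ for $a\in\mathbb R^n$, and $Y_U$ is the Banach lattice (coordinate-wise order) of real sequences with $\|a\|_{Y_U}:=\sup_n\|(a_i)_{i=1}^n\|_{Y_U(n)}<\infty$.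 *)

From HB Require Import structures.
From mathcomp Require Import all_boot all_order all_algebra.
From mathcomp Require Import all_classical all_reals all_analysis.
Set Implicit Arguments. Unset Strict Implicit. Unset Printing Implicit Defensive.
Import Order.TTheory GRing.Theory Num.Theory.
Import numFieldNormedType.Exports.
Local Open Scope classical_set_scope.
Local Open Scope ring_scope.

Record BanachLattice (R : realType) := BanachLatticeMk {
  blT :> completeNormedModType R;
  ble : blT -> blT -> Prop;
  bjoin : blT -> blT -> blT;
  ble_refl : forall x, ble x x;
  ble_anti : forall x y, ble x y -> ble y x -> x = y;
  ble_trans : forall x y z, ble x y -> ble y z -> ble x z;
  bjoin_lub : forall x y z, ble (bjoin x y) z <-> (ble x z /\ ble y z);
  ble_add : forall x y z, ble x y -> ble (x + z) (y + z);
  ble_scale : forall (a : R) x y, 0 <= a -> ble x y -> ble (a *: x) (a *: y);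
  bnorm_lattice : forall x y, ble (bjoin x (- x)) (bjoin y (- y)) -> `|x| <= `|y|
}.

Section BL.
Context {R : realType}.

Definition babs (X : BanachLattice R) (x : X) : X := bjoin x (- x).
Definition bmeet (X : BanachLattice R) (x y : X) : X := - bjoin (- x) (- y).

Definition bdisjoint (X : BanachLattice R) (x y : X) : Prop :=
  bmeet (babs x) (babs y) = 0.

Definition pw_disjoint (X : BanachLattice R) (n : nat) (x : 'I_n -> X) : Prop :=
  forall i j : 'I_n, i != j -> bdisjoint (x i) (x j).

Definition infinite_dim (X : BanachLattice R) : Prop :=
  forall n : nat, exists v : 'I_n -> X,
    forall c : 'I_n -> R, \sum_(i < n) c i *: v i = 0 -> forall i, c i = 0.

(* exponents live in \bar R (the values used are in [1, +oo]);
   inv_exp p = 1/p with the convention 1/oo = 0 *)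
Definition inv_exp (p : \bar R) : R :=
  match p with EFin r => r^-1 | _ => 0 end.

Definition lpnorm (p : \bar R) (n : nat) (a : 'I_n -> R) : R :=
  match p with
  | EFin r => (\sum_(i < n) `|a i| `^ r) `^ r^-1
  | _ => \big[Num.max/0]_(i < n) `|a i|
  end.

Definition rel_decomp_const (X Y : BanachLattice R) (s : \bar R) (D : R) : Prop :=
  forall (n : nat) (x : 'I_n -> X) (y : 'I_n -> Y),
    pw_disjoint x -> (forall i, x i != 0) ->
    pw_disjoint y -> (forall i, y i != 0) ->
    `|\sum_(i < n) y i| <= D * lpnorm s (fun i => `|y i| / `|x i|) * `|\sum_(i < n) x i|.

Definition rel_decomposable (X Y : BanachLattice R) (s : \bar R) : Prop :=
  exists D : R, rel_decomp_const X Y s D.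

Definition Ds (X Y : BanachLattice R) (s : \bar R) : \bar R :=
  ereal_inf [set D%:E | D in [set D : R | rel_decomp_const X Y s D]].

Definition lower_est_const (X : BanachLattice R) (q : \bar R) (M : R) : Prop :=
  forall (n : nat) (x : 'I_n -> X), pw_disjoint x ->
    lpnorm q (fun i => `|x i|) <= M * `|\sum_(i < n) x i|.

Definition lower_estimate (X : BanachLattice R) (q : \bar R) : Prop :=
  exists M : R, lower_est_const X q M.

Definition Mq (X : BanachLattice R) (q : \bar R) : \bar R :=
  ereal_inf [set M%:E | M in [set M : R | lower_est_const X q M]].

Definition frakB (Y : BanachLattice R) (n : nat) : set ('I_n -> Y) :=
  [set y | pw_disjoint y /\ forall i, `|y i| = 1].
Arguments frakB : clear implicits.

Definition YUn_norm (Y : BanachLattice R) (n : nat) (a : 'I_n -> R) : \bar R :=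
  ereal_sup [set (`|\sum_(i < n) a i *: y i|)%:E | y in frakB Y n].

(* ||a||_{Y_U} for a real sequence a (possibly +oo; Y_U = {a | ||a|| < oo}) *)
Definition YU_norm (Y : BanachLattice R) (a : nat -> R) : \bar R :=
  ereal_sup [set YUn_norm Y (fun i : 'I_n => a i) | n in [set: nat]].

Definition in_YU (Y : BanachLattice R) (a : nat -> R) : Prop :=
  (YU_norm Y a < +oo)%E.

(* disjointness in Y_U for the coordinatewise order: min(|a_k|,|b_k|) = 0 *)
Definition seq_disjoint (a b : nat -> R) : Prop :=
  forall k, Num.min `|a k| `|b k| = 0.

Definition lp_fin_rep_YU (Y : BanachLattice R) (p : \bar R) : Prop :=
  forall (n : nat) (eps : R), 0 < eps ->
  exists z : 'I_n -> (nat -> R),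
    (forall i, in_YU Y (z i)) /\
    (forall i j, i != j -> seq_disjoint (z i) (z j)) /\
    forall a : 'I_n -> R,
      ((lpnorm p a)%:E <= YU_norm Y (fun k => (\sum_(i < n) a i * z i k)%R))%E /\
      (YU_norm Y (fun k => (\sum_(i < n) a i * z i k)%R) <= ((1 + eps) * lpnorm p a)%R%:E)%E.

End BL.

(* Fix pairwise disjoint x_1, ..., x_n in X, eps > 0, and disjoint z_1, ..., z_n
   in Y_U spanning a (1 + eps)-copy of l_p^n.  Testing the Y_U-norm of
   sum_i ||x_i|| c_i z_i against a normalised disjoint tuple w of Y produces the
   disjoint vectors y_i = ||x_i|| c_i sum_k z_i(k) w_k with
   ||y_i|| <= (1 + eps) ||x_i|| |c_i|, so relative s-decomposability gives
     ||(||x_i|| c_i)_i||_p <= D (1 + eps) ||c||_s ||sum_i x_i||.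
   Thus multiplication by t = (||x_i||)_i maps l_s^n to l_p^n with norm at most
   D (1 + eps) ||sum_i x_i||.  Such a multiplier has ||t||_r at most its norm,
   where 1/r = 1/p - 1/s >= 1/q (test it on c = t^(r/s)), and ||t||_q <= ||t||_r.
   Letting eps -> 0 gives M_[q](X) <= D for every admissible D. *)

From mathcomp Require Import all_boot all_order all_algebra.
From mathcomp Require Import all_classical all_reals all_analysis.
From mathcomp Require Import lra.
Import Order.TTheory GRing.Theory Num.Theory.
Local Open Scope ring_scope.

Lemma ler_mul1D_gt0 {R : realFieldType} (x y : R) :
  0 <= y -> (forall e, 0 < e -> x <= y * (1 + e)) -> x <= y.
Proof.
move=> y0 xy; apply/ler_addgt0Pr => e e0.
have y1 : 0 < y + 1 by rewrite ltr_wpDl.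
apply: le_trans (xy _ (divr_gt0 e0 y1)) _.
rewrite mulrDr mulr1 lerD2l mulrCA ler_piMr ?(ltW e0) //.
by rewrite ler_pdivrMr // mul1r lerDl.
Qed.

Section VectorLattice.
Context {R : realType} {L : BanachLattice R}.
Local Notation "x <=: y" := (ble x y) (at level 70).
Implicit Types (x y z u v a b c : L) (m : R).

Lemma bleD [x y u v : L] : x <=: y -> u <=: v -> x + u <=: y + v.
Proof.
move=> xy uv; apply: (ble_trans (ble_add u xy)).
by rewrite (addrC y u) (addrC y v); apply: ble_add.
Qed.

Lemma bleN [x y : L] : x <=: y -> - y <=: - x.
Proof.
move=> /(ble_add (- x - y)).
by rewrite addrA subrr add0r addrCA subrr addr0.
Qed.

Lemma bleN2 x y : (- y <=: - x) <-> (x <=: y).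
Proof. by split=> [/bleN|/bleN//]; rewrite !opprK. Qed.

Lemma bleUl x y : x <=: bjoin x y.
Proof. by have [] := (bjoin_lub x y (bjoin x y)).1 (ble_refl _). Qed.

Lemma bleUr x y : y <=: bjoin x y.
Proof. by have [] := (bjoin_lub x y (bjoin x y)).1 (ble_refl _). Qed.

Lemma bleUx [x y z : L] : x <=: z -> y <=: z -> bjoin x y <=: z.
Proof. by move=> xz yz; apply/bjoin_lub. Qed.

Lemma bjoinC x y : bjoin x y = bjoin y x.
Proof.
by apply: ble_anti; apply: bleUx; [apply: bleUr|apply: bleUl|apply: bleUr|apply: bleUl].
Qed.

Lemma bjoinD x y c : bjoin (x + c) (y + c) = bjoin x y + c.
Proof.
apply: ble_anti; first by apply: bleUx; apply: ble_add; [apply: bleUl|apply: bleUr].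
rewrite -[X in _ <=: X](subrK c); apply: ble_add.
by apply: bleUx; rewrite -[X in X <=: _](addrK c); apply: ble_add;
  [apply: bleUl|apply: bleUr].
Qed.

Lemma bleZ2 m x y : 0 < m -> (m *: x <=: m *: y) <-> (x <=: y).
Proof.
move=> m0; split=> [|/(ble_scale (ltW m0))//].
have mV : 0 <= m^-1 by rewrite invr_ge0 ltW.
move=> /(ble_scale mV).
by rewrite !scalerA mulVf ?gt_eqF // !scale1r.
Qed.

Lemma bjoinZ m x y : 0 < m -> bjoin (m *: x) (m *: y) = m *: bjoin x y.
Proof.
move=> m0; apply: ble_anti.
  by apply: bleUx; apply/bleZ2 => //; [apply: bleUl|apply: bleUr].
have m_neq0 : m != 0 := lt0r_neq0 m0.
set J := bjoin (m *: x) (m *: y); rewrite -[J](scalerKV m_neq0); apply/bleZ2 => //.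
by apply: bleUx; apply/(bleZ2 _ _ _ m0); rewrite scalerKV //; [apply: bleUl|apply: bleUr].
Qed.

Lemma blexI x y z : (z <=: bmeet x y) <-> (z <=: x /\ z <=: y).
Proof.
rewrite /bmeet; split=> [/bleN|[xz yz]].
  by rewrite opprK => /bjoin_lub[xz yz]; split; apply/bleN2.
by rewrite -[z]opprK; apply: bleN; apply: bleUx; apply: bleN.
Qed.

Lemma bleIl x y : bmeet x y <=: x.
Proof. by have [] := (blexI x y (bmeet x y)).1 (ble_refl _). Qed.

Lemma bleIr x y : bmeet x y <=: y.
Proof. by have [] := (blexI x y (bmeet x y)).1 (ble_refl _). Qed.

Lemma bleI2 [x y u v : L] : x <=: u -> y <=: v -> bmeet x y <=: bmeet u v.
Proof.
move=> xu yv; apply/blexI; split.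
  exact: ble_trans (bleIl _ _) xu.
exact: ble_trans (bleIr _ _) yv.
Qed.

Lemma bmeetZ m x y : 0 < m -> bmeet (m *: x) (m *: y) = m *: bmeet x y.
Proof. by move=> m0; rewrite /bmeet -!scalerN bjoinZ // scalerN. Qed.

Lemma bjoinE x y : bjoin x y = x + y - bmeet x y.
Proof.
rewrite /bmeet opprK addrC -bjoinD bjoinC.
by rewrite addKr addrCA addNr addr0.
Qed.

Lemma babs_ge x : x <=: babs x. Proof. exact: bleUl. Qed.
Lemma babs_geN x : - x <=: babs x. Proof. exact: bleUr. Qed.

Lemma babs_ge0 x : 0 <=: babs x.
Proof.
have := bleD (babs_ge x) (babs_geN x).
rewrite subrr -mulr2n -scaler_nat -[X in X <=: _](scaler0 _ 2%:R).
by move/(bleZ2 _ _ _ (ltr0n _ 2)).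
Qed.

Lemma babs0 : babs (0 : L) = 0.
Proof.
apply: ble_anti; last exact: babs_ge0.
by rewrite /babs oppr0; apply: bleUx; apply: ble_refl.
Qed.

Lemma ble_babsD u v : babs (u + v) <=: babs u + babs v.
Proof.
apply: bleUx; first exact: bleD (babs_ge _) (babs_ge _).
by rewrite opprD; apply: bleD (babs_geN _) (babs_geN _).
Qed.

Lemma ble_babsZ m u : babs (m *: u) <=: `|m| *: babs u.
Proof.
have [m0|m0] := leP 0 m.
  rewrite ger0_norm //; apply: bleUx; first exact: ble_scale m0 (babs_ge _).
  by rewrite -scalerN; apply: ble_scale m0 (babs_geN _).
have Nm0 : 0 <= - m by rewrite oppr_ge0 ltW.
rewrite ltr0_norm //; apply: bleUx.
  by rewrite -[m *: u]opprK -scaleNr -scalerN; apply: ble_scale Nm0 (babs_geN _).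
by rewrite -scaleNr; apply: ble_scale Nm0 (babs_ge _).
Qed.

Lemma bleIDl [a b c : L] : 0 <=: a -> 0 <=: b -> 0 <=: c ->
  bmeet (a + b) c <=: bmeet a c + bmeet b c.
Proof.
move=> a0 b0 c0; set d := bmeet (a + b) c.
have ble_subr x y : 0 <=: y -> x - y <=: x.
  move=> y0; rewrite -[X in _ <=: X]addr0; apply: bleD (ble_refl _) _.
  by rewrite -oppr0; apply: bleN.
have da : d - a <=: bmeet b c.
  apply/blexI; split; last exact: ble_trans (ble_subr _ _ a0) (bleIr _ _).
  by have := ble_add (- a) (bleIl (a + b) c); rewrite addrAC subrr add0r.
have dab : d - bmeet b c <=: bmeet a c.
  apply/blexI; split; last by apply: ble_trans (ble_subr _ _ _) (bleIr _ _); apply/blexI.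
  by have := ble_add (- bmeet b c) (ble_add a da); rewrite subrK addrAC subrr add0r.
by have := ble_add (bmeet b c) dab; rewrite subrK.
Qed.

Lemma bmeet_babs_ge0 u v : 0 <=: bmeet (babs u) (babs v).
Proof. by apply/blexI; split; apply: babs_ge0. Qed.

Lemma bdisj_sym u v : bdisjoint u v -> bdisjoint v u.
Proof. by rewrite /bdisjoint /bmeet bjoinC. Qed.

Lemma bdisj0l v : bdisjoint 0 v.
Proof.
rewrite /bdisjoint; apply: ble_anti _ (bmeet_babs_ge0 0 v).
by rewrite babs0; apply: bleIl.
Qed.

Lemma bdisjDl u u' v : bdisjoint u v -> bdisjoint u' v -> bdisjoint (u + u') v.
Proof.
move=> uv u'v; apply: ble_anti _ (bmeet_babs_ge0 _ _).
apply: ble_trans (bleI2 (ble_babsD u u') (ble_refl _)) _.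
apply: ble_trans (bleIDl (babs_ge0 _) (babs_ge0 _) (babs_ge0 _)) _.
by rewrite uv u'v addr0; apply: ble_refl.
Qed.

Lemma bdisjZl m u v : bdisjoint u v -> bdisjoint (m *: u) v.
Proof.
move=> uv; apply: ble_anti _ (bmeet_babs_ge0 _ _).
pose M : R := Num.max `|m| 1; have M0 : 0 < M by rewrite lt_max ltr01 orbT.
have ble_scale_max k w : k <= M -> 0 <=: w -> k *: w <=: M *: w.
  move=> kM w0; have Mk : 0 <= M - k by rewrite subr_ge0.
  by have := ble_add (k *: w) (ble_scale Mk w0); rewrite scaler0 add0r -scalerDl subrK.
apply: ble_trans (bleI2 (u := M *: babs u) (v := M *: babs v) _ _) _.
- apply: ble_trans (ble_babsZ m u) _.
  by apply: ble_scale_max (babs_ge0 _); rewrite le_max lexx.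
- rewrite -[X in X <=: _]scale1r; apply: ble_scale_max (babs_ge0 _).
  by rewrite le_max lexx orbT.
by rewrite bmeetZ // uv scaler0; apply: ble_refl.
Qed.

Lemma bdisj_suml (I : Type) (r : seq I) (P : pred I) (F : I -> L) v :
  (forall i, P i -> bdisjoint (F i) v) -> bdisjoint (\sum_(i <- r | P i) F i) v.
Proof.
move=> Fv; apply: (big_ind (fun w => bdisjoint w v)) => //; first exact: bdisj0l.
by move=> x y; apply: bdisjDl.
Qed.

Lemma bdisj_norm_le a b : bdisjoint a b -> `|a| <= `|a + b|.
Proof.
(* [|a + b| >= (|a| - |b|) \/ 0 = |a| - |a| /\ |b| = |a|], then use the lattice norm. *)
move=> ab; apply: bnorm_lattice; rewrite -/(babs a) -/(babs (a + b)).
have aB : a - babs b <=: babs (a + b).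
  apply: ble_trans _ (babs_ge _); apply: (bleD (ble_refl a)).
  by have := bleN (babs_geN b); rewrite opprK.
have NaB : - a - babs b <=: babs (a + b).
  apply: ble_trans _ (babs_geN _); rewrite opprD; apply: (bleD (ble_refl (- a))).
  by apply: bleN; apply: babs_ge.
have AB : babs a - babs b <=: babs (a + b) by rewrite /babs -bjoinD; apply: bleUx.
have := bleUx AB (babs_ge0 (a + b)).
by rewrite -(subrr (babs b)) bjoinD bjoinE (ab : bmeet _ _ = 0) subr0 addrK.
Qed.

Lemma pw_disjoint_lift [n] [x : 'I_n.+1 -> L] i :
  pw_disjoint x -> pw_disjoint (fun k => x (lift i k)).
Proof. by move=> xd j k jk; apply: xd; rewrite (inj_eq lift_inj). Qed.

Lemma infinite_dim_neq0 : infinite_dim L -> exists v : L, v != 0.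
Proof.
move=> /(_ 1%N) [v vfree]; exists (v ord0); apply/eqP => v0.
have := vfree (fun=> 1) _ ord0; rewrite big_ord1 v0 scaler0 => /(_ erefl).
by move/eqP; rewrite oner_eq0.
Qed.

End VectorLattice.

Section LpNorm.
Context {R : realType}.
Implicit Types (p q : \bar R) (n : nat).

Lemma pos_exp_cases [p] : (0 < p)%E -> (exists2 r, 0 < r & p = r%:E) \/ p = +oo%E.
Proof.
case: p => [r| |] p0; last by rewrite ltNge leNye in p0.
  by left; exists r; rewrite -?lte_fin.
by right.
Qed.

Lemma lpnorm_ge0 p {n} (a : 'I_n -> R) : 0 <= lpnorm p a.
Proof. by case: p => [r| |] /=; rewrite ?powR_ge0 ?bigmax_ge_id. Qed.

Lemma sum_powR_ge0 {n} (a : 'I_n -> R) r : 0 <= \sum_(i < n) `|a i| `^ r.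
Proof. by apply: sumr_ge0 => i _; apply: powR_ge0. Qed.

Lemma lpnorm_le p {n} (a b : 'I_n -> R) : (0 < p)%E ->
  (forall i, `|a i| <= `|b i|) -> lpnorm p a <= lpnorm p b.
Proof.
case/pos_exp_cases=> [[r r0 ->]|->] ab /=; last by apply: le_bigmax2 => i _; apply: ab.
have r_ge0 := ltW r0.
apply: ge0_ler_powR; rewrite ?nnegrE ?invr_ge0 ?sum_powR_ge0 //.
by apply: ler_sum => i _; apply: ge0_ler_powR; rewrite ?nnegrE.
Qed.

Lemma lpnorm_lift p {n} (a : 'I_n.+1 -> R) i : (0 < p)%E ->
  lpnorm p (fun k => a (lift i k)) <= lpnorm p a.
Proof.
case/pos_exp_cases=> [[r r0 ->]|->] /=; last first.
  by apply: bigmax_le => [|k _]; rewrite ?bigmax_ge_id ?le_bigmax.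
have r_ge0 := ltW r0.
apply: ge0_ler_powR; rewrite ?nnegrE ?invr_ge0 ?sum_powR_ge0 //.
by rewrite (bigD1_ord i) //= lerDr powR_ge0.
Qed.

Lemma lpnormZ p {n} (a : 'I_n -> R) c : (0 < p)%E -> 0 <= c ->
  lpnorm p (fun i => c * a i) = c * lpnorm p a.
Proof.
case/pos_exp_cases=> [[r r0 ->]|->] c0 /=.
  under eq_bigr do rewrite normrM (ger0_norm c0) (powRM _ c0 (normr_ge0 _)).
  rewrite -mulr_sumr powRM ?powR_ge0 ?sum_powR_ge0 //.
  by rewrite -powRrM mulfV ?gt_eqF ?powRr1.
elim/big_rec2: _ => [|i x y _ ->]; first by rewrite mulr0.
by rewrite normrM ger0_norm // maxr_pMr.
Qed.

Lemma lpnorm_delta p {n} (i : 'I_n) : (0 < p)%E -> lpnorm p (fun j => (j == i)%:R) = 1.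
Proof.
case/pos_exp_cases=> [[r r0 ->]|->] /=.
  rewrite (bigD1 i) //= eqxx normr1 powR1 big1 ?addr0 ?powR1 //.
  by move=> j /negPf ->; rewrite normr0 powR0 ?gt_eqF.
apply/eqP; rewrite eq_le; apply/andP; split.
  by apply: bigmax_le => // j _; rewrite normr_nat; case: (j == i).
by apply: le_trans (le_bigmax _ (fun j => `|(j == i)%:R|) i); rewrite eqxx normr1.
Qed.

Lemma lpnorm_cst1 p (v : R) : (0 < p)%E -> lpnorm p (fun _ : 'I_1 => v) = `|v|.
Proof.
case/pos_exp_cases=> [[r r0 ->]|->] /=; last by rewrite big_ord_recl big_ord0 /= max_l.
by rewrite big_ord1 -powRrM mulfV ?gt_eqF ?powRr1.
Qed.

Lemma normr_le_lpnorm p {n} (a : 'I_n -> R) i : (0 < p)%E -> `|a i| <= lpnorm p a.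
Proof.
case/pos_exp_cases=> [[r r0 ->]|->] /=; last exact: (le_bigmax _ (fun i => `|a i|) i).
have r_ge0 := ltW r0.
have -> : `|a i| = (`|a i| `^ r) `^ r^-1 by rewrite -powRrM mulfV ?gt_eqF ?powRr1.
apply: ge0_ler_powR; rewrite ?nnegrE ?invr_ge0 ?powR_ge0 ?sum_powR_ge0 //.
by rewrite (bigD1 i) //= lerDl; apply: sumr_ge0 => k _; apply: powR_ge0.
Qed.

Lemma lpnorm_exp_antimono p q {n} (a : 'I_n -> R) : (0 < p)%E -> (p <= q)%E ->
  lpnorm q a <= lpnorm p a.
Proof.
case/pos_exp_cases=> [[r r0 ->]|->]; last by rewrite leye_eq => /eqP->.
case: q => [Q rQ| _ |//]; last first.
  by apply: bigmax_le => [|i _]; rewrite ?lpnorm_ge0 ?normr_le_lpnorm ?lte_fin.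
rewrite lee_fin in rQ; have [Q0 Qr0] : 0 < Q /\ 0 <= Q - r by split; lra.
set S := lpnorm r%:E a; have S0 : 0 <= S := lpnorm_ge0 _ a.
have aS i : `|a i| <= S by apply: normr_le_lpnorm; rewrite lte_fin.
have SrE : S `^ r = \sum_(i < n) `|a i| `^ r.
  by rewrite -powRrM mulVf ?gt_eqF ?powRr1 ?sum_powR_ge0.
have termwise i : `|a i| `^ Q <= `|a i| `^ r * S `^ (Q - r).
  have [->|ai0] := eqVneq `|a i| 0; first by rewrite powR0 ?gt_eqF ?mulr_ge0 ?powR_ge0.
  rewrite -[in X in X <= _](subrKC r Q) (powRD (x := `|a i|)) ?ai0 ?implybT //.
  by rewrite ler_wpM2l ?powR_ge0 // ge0_ler_powR.
have SQ : (S `^ Q) `^ Q^-1 = S by rewrite -powRrM mulfV ?gt_eqF ?powRr1.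
rewrite /= -[X in _ <= X]SQ.
apply: ge0_ler_powR; rewrite ?nnegrE ?invr_ge0 ?(ltW Q0) ?sum_powR_ge0 ?powR_ge0 //.
apply: le_trans (ler_sum _ (fun i _ => termwise i)) _.
by rewrite -mulr_suml -SrE -powRD ?subrKC // gt_eqF.
Qed.

Lemma lpnorm_powR {n} (t : 'I_n -> R) (a r : R) : 0 < a -> (forall i, 0 <= t i) ->
  lpnorm a%:E (fun i => t i `^ (r / a)) = (\sum_(i < n) t i `^ r) `^ a^-1.
Proof.
move=> a0 t0; congr (_ `^ _); apply: eq_bigr => i _.
by rewrite ger0_norm ?powR_ge0 // -powRrM divfK ?gt_eqF.
Qed.

End LpNorm.

Section Multiplier.
Context {R : realType} {p s : \bar R} {n : nat} {t : 'I_n -> R} {C : R}.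
Hypotheses (p0 : (0 < p)%E) (ps : (p <= s)%E) (t0 : forall i, 0 <= t i) (C0 : 0 <= C).
Hypothesis mult_le : forall c : 'I_n -> R, lpnorm p (fun i => t i * c i) <= C * lpnorm s c.

Let s0 : (0 < s)%E := lt_le_trans p0 ps.

Lemma multiplier_entry_le j : t j <= C.
Proof.
have := mult_le (fun i => (i == j)%:R); rewrite lpnorm_delta // mulr1.
suff -> : (fun i => t i * (i == j)%:R) = (fun i => t j * (i == j)%:R).
  by rewrite lpnormZ // lpnorm_delta // mulr1.
by apply: funext => i; have [->|] := eqVneq i j; rewrite ?mulr0.
Qed.

Lemma multiplier_lpnorm_oo : s = +oo%E -> lpnorm p t <= C.
Proof.
move=> soo; have := mult_le (fun=> 1); rewrite soo.
under eq_fun do rewrite mulr1.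
move/le_trans; apply; rewrite -[X in _ <= X]mulr1 ler_wpM2l //.
by apply: bigmax_le => // i _; rewrite normr1.
Qed.

Lemma multiplier_lpnorm_fin [P S r : R] : p = P%:E -> s = S%:E -> 0 < r ->
  r^-1 = P^-1 - S^-1 -> lpnorm r%:E t <= C.
Proof.
move=> pP sS r0 rE; move: p0 s0; rewrite pP sS !lte_fin => P0 S0.
have rPE : r / P = 1 + r / S by rewrite -[P^-1](subrK S^-1) -rE mulrDr mulfV ?gt_eqF.
(* The extremal test vector: [t * c = t ^ (r / P)], so both sides become powers
   of [T = \sum_i t i ^ r]. *)
pose c i := t i `^ (r / S).
have tcE : (fun i => t i * c i) = (fun i => t i `^ (r / P)).
  apply: funext => i; have [->|ti0] := eqVneq (t i) 0.
    by rewrite mul0r powR0 // mulf_neq0 ?invr_eq0 ?gt_eqF.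
  by rewrite rPE powRD ?ti0 ?implybT // powRr1.
have := mult_le c; rewrite tcE /c pP sS !lpnorm_powR //.
set T := \sum_(i < n) t i `^ r.
have -> : lpnorm r%:E t = T `^ r^-1.
  by congr (_ `^ _); apply: eq_bigr => i _; rewrite ger0_norm.
have [->|T0] := eqVneq T 0; first by move=> _; rewrite powR0 // invr_eq0 gt_eqF.
have Tpos : 0 < T by rewrite lt_def T0 sumr_ge0 // => i _; apply: powR_ge0.
rewrite -[P^-1](subrK S^-1) -rE powRD ?T0 ?implybT // ler_pM2r //.
exact: powR_gt0.
Qed.

Lemma multiplier_lpnorm_le q : (0 < q)%E -> inv_exp q + inv_exp s <= inv_exp p ->
  lpnorm q t <= C.
Proof.
case/pos_exp_cases=> [[Q Q0 ->]|->] hinv; last first.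
  by apply: bigmax_le => // i _; rewrite ger0_norm ?multiplier_entry_le.
have QV0 : 0 < Q^-1 by rewrite invr_gt0.
have [[P P0 Ep]|Ep] := pos_exp_cases p0; last first.
  by move: ps hinv; rewrite Ep leye_eq => /eqP-> /=; lra.
have [[S S0 Es]|Es] := pos_exp_cases s0; rewrite Ep Es /= in hinv.
  have rV0 : 0 < P^-1 - S^-1 by lra.
  have r0 : 0 < (P^-1 - S^-1)^-1 by rewrite invr_gt0.
  apply: le_trans _ (multiplier_lpnorm_fin Ep Es r0 (invrK _)).
  apply: lpnorm_exp_antimono; rewrite ?lte_fin ?lee_fin // -lef_pV2 ?posrE // invrK.
  lra.
apply: le_trans _ (multiplier_lpnorm_oo Es); rewrite Ep.
by apply: lpnorm_exp_antimono; rewrite ?lte_fin ?lee_fin // -lef_pV2 ?posrE //; lra.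
Qed.

End Multiplier.

Section RelativeDecomposability.
Context {R : realType} {X Y : BanachLattice R} {s : \bar R} {D : R}.
Hypotheses (s0 : (0 < s)%E) (hD : rel_decomp_const X Y s D).

Lemma rel_decomp_const_ge1 : (exists x : X, x != 0) -> (exists y : Y, y != 0) -> 1 <= D.
Proof.
move=> [u u0] [v v0].
have cst_disj (L : BanachLattice R) (w : L) : pw_disjoint (fun _ : 'I_1 => w).
  by move=> i j; rewrite !ord1 eqxx.
have := hD 1%N (fun _ => u) (fun _ => v) (cst_disj _ u) (fun=> u0) (cst_disj _ v) (fun=> v0).
rewrite !big_ord1 lpnorm_cst1 // ger0_norm ?divr_ge0 // -mulrA divfK ?normr_eq0 //.
by rewrite -{1}[`|v|]mul1r ler_pM2r ?normr_gt0.
Qed.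

Hypothesis D0 : 0 <= D.

(* Entries with [x i = 0] are dropped: there [y i = 0] as well, so the ratio is
   the junk value [0 / 0 = 0]. *)
Lemma rel_decomp_const_zeros [n] [x : 'I_n -> X] [y : 'I_n -> Y] :
  pw_disjoint x -> pw_disjoint y -> (forall i, x i = 0 -> y i = 0) ->
  `|\sum_(i < n) y i| <= D * lpnorm s (fun i => `|y i| / `|x i|) * `|\sum_(i < n) x i|.
Proof.
elim: n x y => [|n IH] x y xd yd xy0; first by rewrite !big_ord0 !normr0 mulr0.
have [[i yi0]|ny0] := pselect (exists i, y i = 0); last first.
  apply: hD => //; last by move=> i; apply/eqP => yi0; apply: ny0; exists i.
  by move=> i; apply/eqP => /xy0 yi0; apply: ny0; exists i.
have := IH _ _ (pw_disjoint_lift i xd) (pw_disjoint_lift i yd) (fun k => xy0 (lift i k)).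
rewrite (bigD1_ord i) //= yi0 add0r => /le_trans; apply.
rewrite [\sum_(k < n.+1) x k](bigD1_ord i) //= addrC.
apply: ler_pM; rewrite ?mulr_ge0 ?lpnorm_ge0 //.
  by rewrite ler_wpM2l // (lpnorm_lift _ _ i s0).
apply: bdisj_norm_le; apply: bdisj_suml => k _; apply: xd.
by rewrite eq_sym neq_lift.
Qed.

End RelativeDecomposability.

Section UniversalLattice.
Context {R : realType} {Y : BanachLattice R}.

Lemma seq_disjoint_eq0 [a b : nat -> R] k :
  seq_disjoint a b -> a k = 0 \/ b k = 0.
Proof.
by move/(_ k); rewrite /Order.min; case: ifP => _ /normr0_eq0 ->; [left|right].
Qed.

Definition comb {N} (w : 'I_N -> Y) (a : nat -> R) : Y := \sum_(k < N) a k *: w k.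

Lemma norm_comb_le_YU_norm [N] [w : 'I_N -> Y] a :
  frakB w -> ((`|comb w a|)%:E <= YU_norm Y a)%E.
Proof.
move=> wB; apply: (@le_trans _ _ (YUn_norm Y (fun k : 'I_N => a k))).
  by apply: ereal_sup_ubound; exists w.
by apply: ereal_sup_ubound; exists N.
Qed.

Lemma bdisj_comb [N] [w : 'I_N -> Y] [a b] :
  pw_disjoint w -> seq_disjoint a b -> bdisjoint (comb w a) (comb w b).
Proof.
move=> wd ab; apply: bdisj_suml => k _; apply: bdisj_sym; apply: bdisj_suml => l _.
have [<-|kl] := eqVneq k l.
  by have [->|->] := seq_disjoint_eq0 k ab; rewrite scale0r;
    [apply: bdisj_sym|]; apply: bdisj0l.
by apply: bdisjZl; apply: bdisj_sym; apply: bdisjZl; apply: wd.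
Qed.

End UniversalLattice.

Section LowerEstimate.
Context {R : realType} {X Y : BanachLattice R} {s : \bar R} {D : R}.
Hypotheses (s0 : (0 < s)%E) (D0 : 0 <= D) (hD : rel_decomp_const X Y s D).

Lemma YU_norm_sum_le [n] [x : 'I_n -> X] [z : 'I_n -> nat -> R] [K : R] (c : 'I_n -> R) :
  pw_disjoint x -> (forall i j, i != j -> seq_disjoint (z i) (z j)) ->
  0 <= K -> (forall i, (YU_norm Y (z i) <= K%:E)%E) ->
  (YU_norm Y (fun k => (\sum_(i < n) `|x i| * c i * z i k)%R)
    <= (D * `|\sum_(i < n) x i| * K * lpnorm s c)%:E)%E.
Proof.
move=> xd zd K0 zK; apply/ereal_supP => _ [N _ <-]; apply/ereal_supP => _ [w wB <-].
rewrite lee_fin; have [wd _] := wB.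
pose y i := (`|x i| * c i) *: comb w (z i).
have -> : \sum_(k < N) (\sum_(i < n) `|x i| * c i * z i k) *: w k = \sum_(i < n) y i.
  under eq_bigr do rewrite scaler_suml.
  rewrite exchange_big; apply: eq_bigr => i _; rewrite /y /comb scaler_sumr.
  by apply: eq_bigr => k _; rewrite scalerA.
have yd : pw_disjoint y.
  move=> i j ij; apply: bdisjZl; apply: bdisj_sym; apply: bdisjZl; apply: bdisj_sym.
  exact: bdisj_comb wd (zd i j ij).
have y0 i : x i = 0 -> y i = 0 by rewrite /y => ->; rewrite normr0 mul0r scale0r.
apply: le_trans (rel_decomp_const_zeros s0 hD D0 xd yd y0) _.
rewrite mulrAC -[X in _ <= X]mulrA ler_wpM2l ?mulr_ge0 // -lpnormZ //.
apply: lpnorm_le => // i; have [->|xi0] := eqVneq (x i) 0.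
  by rewrite normr0 invr0 mulr0 normr0.
rewrite ger0_norm ?divr_ge0 // /y normrZ normrM normr_id [`|x i| * _]mulrC.
rewrite mulrAC mulfK ?normr_eq0 // normrM (ger0_norm K0) [K * _]mulrC ler_wpM2l //.
by rewrite -lee_fin; apply: le_trans (norm_comb_le_YU_norm _ wB) (zK i).
Qed.

Lemma lower_est_const_of_rel_decomp [p q] : (0 < p)%E -> (p <= s)%E -> (0 < q)%E ->
  inv_exp q + inv_exp s <= inv_exp p -> lp_fin_rep_YU Y p -> lower_est_const X q D.
Proof.
move=> p0 ps q0 hinv rep n x xd; apply: ler_mul1D_gt0 => [|eps eps0].
  by rewrite mulr_ge0.
have [z [_ [zd zrep]]] := rep n eps eps0.
have zK i : (YU_norm Y (z i) <= (1 + eps)%:E)%E.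
  have [_] := zrep (fun j => (j == i)%:R); rewrite lpnorm_delta // mulr1.
  suff -> : (fun k => \sum_(j < n) (j == i)%:R * z j k) = z i by [].
  apply: funext => k; rewrite (bigD1 i) //= eqxx mul1r big1 ?addr0 //.
  by move=> j /negPf ->; rewrite mul0r.
have eps1 : 0 <= 1 + eps by rewrite addr_ge0 // ltW.
apply: (multiplier_lpnorm_le p0 ps (fun i => normr_ge0 (x i))) => //.
  by rewrite !mulr_ge0.
move=> c; have [lb _] := zrep (fun i => `|x i| * c i); rewrite -lee_fin.
exact: le_trans lb (YU_norm_sum_le c xd zd eps1 zK).
Qed.

End LowerEstimate.

Theorem mainTheorem11 (R : realType) (X Y : BanachLattice R) (s p q : \bar R) :
  infinite_dim X -> infinite_dim Y ->
  (1 <= s)%E -> rel_decomposable X Y s ->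
  (1 <= p)%E -> (p <= s)%E -> lp_fin_rep_YU Y p ->
  (1 <= q)%E -> inv_exp q + inv_exp s <= inv_exp p ->
  lower_estimate X q /\ (Mq X q <= Ds X Y s)%E.
Proof.
move=> iX iY s1 [D hD] p1 ps rep q1 hinv.
have lt01 : (0 < 1 :> \bar R)%E by rewrite lte_fin ltr01.
have [s0 p0 q0] : [/\ (0 < s)%E, (0 < p)%E & (0 < q)%E].
  by split; apply: lt_le_trans lt01 _.
have lower D' : rel_decomp_const X Y s D' -> lower_est_const X q D'.
  move=> hD'.
  have D'1 := rel_decomp_const_ge1 s0 hD' (infinite_dim_neq0 iX) (infinite_dim_neq0 iY).
  exact/(lower_est_const_of_rel_decomp s0 (le_trans ler01 D'1) hD' p0 ps q0 hinv rep).
split; first by exists D; apply: lower.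
apply/ereal_infP => _ [D' hD' <-]; apply: ereal_inf_lbound.
by exists D' => //; apply: lower.
Qed.
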